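(* Fix $M>0$ and consider the following repeated game (Protocol 2) between nature, a forecaster and agents, for $t=1,2,\dots$: (1) nature reveals $x_t\in\mathcal{X}$ and chooses $\mu_t^*\in[0,1]$ without revealing it; (2) the forecaster reveals $\mu_t,c_t$; (3) agent $t$, with loss function $l_t:\mathcal{A}\times\{0,1\}\to\mathbb{R}$, reveals an action $a_t\in\mathcal{A}$ and a stake $b_t\in[-M,M]$; (4) nature samples $y_t\sim\mathrm{Bernoulli}(\mu_t^* )$ and reveals $y_t$; (5) the agent incurs loss $l_t(a_t,y_t)-b_t(y_t-\mu_t)+|b_t|c_t$ and the forecaster incurs loss $b_t(y_t-\mu_t)-|b_t|c_t$. Each player's choice at time $t$ may depend arbitrarily on everything revealed before it, but not on future quantities. Suppose additionally that $b_t\ge 0$ for all $t$. Then there exists an algorithm for the forecaster that outputs $\mu_t$ with $c_t\equiv 0$ and is asymptotically exact for $\mu_t^*,b_t$ generated by any strategy of nature and agents, i.e. $$\limsup_{T\to\infty}\frac1T\sum_{t=1}^T b_t(\mu_t-y_t)=0.$$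
   Context: A sequence of forecasts $(\mu_t,c_t)$ is called asymptotically exact relative to $y_1,b_1,y_2,b_2,\dots$ if $\limsup_{T\to\infty}\frac1T\sum_{t=1}^T b_t(\mu_t-y_t)-|b_t|c_t=0$. *)

From Stdlib Require Import Reals List.
From Coquelicot Require Import Coquelicot.
Import ListNotations.
Open Scope R_scope.

(* psum f T = f 0 + ... + f (T-1)   (times are 0-indexed: index t <-> paper time t+1) *)
Fixpoint psum (f : nat -> R) (T : nat) : R :=
  match T with
  | O => 0
  | S n => psum f n + f n
  end.

(* (mu_t, c_t) asymptotically exact relative to y_1,b_1,y_2,b_2,... :
   limsup_{T -> oo} (1/T) sum_{t=1}^T ( b_t (mu_t - y_t) - |b_t| c_t ) = 0.
   The averaged sequence is indexed by T-1 (i.e. n |-> average over n+1 rounds),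
   which does not change the limsup and avoids division by 0. *)
Definition asymptotically_exact (mu c y b : nat -> R) : Prop :=
  LimSup_seq (fun n => psum (fun t => b t * (mu t - y t) - Rabs (b t) * c t) (S n)
                        / INR (S n)) = Finite 0.

(* The current x_t is passed
   separately.  (The forecaster's own past outputs are recomputable from this.) *)
Definition history {X A : Type} (x : nat -> X) (a : nat -> A) (b y : nat -> R)
  (t : nat) : list (X * A * R * R) :=
  map (fun s => (x s, a s, b s, y s)) (seq 0 t).

(* A deterministic forecasting algorithm outputting mu_t (with c_t = 0). *)
Definition forecaster (X A : Type) := list (X * A * R * R) -> X -> R.

Definition run_forecaster {X A : Type} (F : forecaster X A)
  (x : nat -> X) (a : nat -> A) (b y : nat -> R) : nat -> R :=
  fun t => F (history x a b y t) (x t).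

(* The forecaster keeps its running score S_t = sum_{s<t} b_s (mu_s - y_s) and
   plays mu_t = 1 when S_t <= 0 and mu_t = 0 otherwise.  Since b_t >= 0, the
   next increment b_t (mu_t - y_t) is then >= 0 when S_t <= 0 and <= 0 when
   S_t > 0, and it has size at most M; so S_t is pulled back towards 0 and stays
   in [-M, M].  A bounded partial sum divided by T tends to 0. *)
From Stdlib Require Import Reals List Lra.
From Coquelicot Require Import Coquelicot.
Import ListNotations.
Open Scope R_scope.

Lemma psum_ext (f g : nat -> R) (n : nat) :
  (forall t, f t = g t) -> psum f n = psum g n.
Proof. intros Hfg; induction n as [|n IH]; simpl; [reflexivity | now rewrite IH, Hfg]. Qed.

Lemma is_lim_seq_bounded_div_INR (u : nat -> R) (M : R) :
  (forall n, Rabs (u n) <= M) -> is_lim_seq (fun n => u n / INR (S n)) 0.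
Proof.
  intros Hu.
  assert (Hlim : is_lim_seq (fun n => M * / INR (S n)) 0).
  { replace (Finite 0) with (Rbar_mult M (Rbar_inv p_infty)) by (simpl; f_equal; ring).
    apply is_lim_seq_scal_l, is_lim_seq_inv; [|discriminate].
    apply (is_lim_seq_incr_1 INR), is_lim_seq_INR. }
  apply (is_lim_seq_le_le (fun n => - (M * / INR (S n))) _ (fun n => M * / INR (S n))).
  - intros n.
    assert (Hinv : 0 < / INR (S n)) by apply Rinv_0_lt_compat, lt_0_INR, Nat.lt_0_succ.
    destruct (proj1 (Rabs_le_between _ _) (Hu n)).
    unfold Rdiv; split; nra.
  - replace (Finite 0) with (Rbar_opp 0) by (simpl; f_equal; ring).
    exact (proj1 (is_lim_seq_opp _ _) Hlim).
  - exact Hlim.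
Qed.

Lemma LimSup_average_of_bounded_psum (f : nat -> R) (M : R) :
  (forall n, Rabs (psum f n) <= M) ->
  LimSup_seq (fun n => psum f (S n) / INR (S n)) = Finite 0.
Proof.
  intros Hf.
  apply is_LimSup_seq_unique, is_lim_LimSup_seq.
  now apply (is_lim_seq_bounded_div_INR (fun n => psum f (S n)) M).
Qed.

Definition hedge (s : R) : R := if Rle_dec s 0 then 1 else 0.

Lemma hedge_range (s : R) : 0 <= hedge s <= 1.
Proof. unfold hedge; destruct (Rle_dec s 0); lra. Qed.

Lemma hedge_step_bound (M s bt yt : R) :
  Rabs s <= M -> 0 <= bt <= M -> yt = 0 \/ yt = 1 ->
  Rabs (s + bt * (hedge s - yt)) <= M.
Proof.
  intros Hs Hbt Hyt.
  apply Rabs_le_between in Hs; apply Rabs_le.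
  unfold hedge; destruct (Rle_dec s 0), Hyt as [-> | ->]; nra.
Qed.

Definition score_step {X A : Type} (s : R) (e : X * A * R * R) : R :=
  let '(_, _, bt, yt) := e in s + bt * (hedge s - yt).

Definition score {X A : Type} (h : list (X * A * R * R)) : R :=
  fold_left score_step h 0.

Definition hedging_forecaster (X A : Type) : forecaster X A :=
  fun h _ => hedge (score h).

Section HedgingRun.

Variables (X A : Type) (x : nat -> X) (a : nat -> A) (b y : nat -> R).

Lemma history_S (t : nat) :
  history x a b y (S t) = history x a b y t ++ [(x t, a t, b t, y t)].
Proof. unfold history; now rewrite seq_S, map_app. Qed.

Lemma score_history_S (t : nat) :
  score (history x a b y (S t))
  = score (history x a b y t) + b t * (hedge (score (history x a b y t)) - y t).
Proof. unfold score; now rewrite history_S, fold_left_app. Qed.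

Lemma psum_hedging_forecaster (t : nat) :
  psum (fun s => b s * (run_forecaster (hedging_forecaster X A) x a b y s - y s)) t
  = score (history x a b y t).
Proof.
  induction t as [|t IH]; [reflexivity|].
  simpl psum; now rewrite IH, score_history_S.
Qed.

Lemma score_history_bound (M : R) :
  0 <= M -> (forall t, 0 <= b t <= M) -> (forall t, y t = 0 \/ y t = 1) ->
  forall t, Rabs (score (history x a b y t)) <= M.
Proof.
  intros HM Hb Hy t; induction t as [|t IH].
  - unfold score; simpl; rewrite Rabs_R0; exact HM.
  - rewrite score_history_S; now apply hedge_step_bound.
Qed.

End HedgingRun.

Theorem corollary1 :
  forall (X A : Type) (M : R), 0 < M ->
  exists F : forecaster X A,
    (forall h xt, 0 <= F h xt <= 1) /\
    forall (x : nat -> X) (a : nat -> A) (b y : nat -> R),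
      (forall t, - M <= b t <= M) ->
      (forall t, 0 <= b t) ->
      (forall t, y t = 0 \/ y t = 1) ->
      asymptotically_exact (run_forecaster F x a b y) (fun _ => 0) y b.
Proof.
  intros X A M HM. exists (hedging_forecaster X A). split.
  - intros h xt; apply hedge_range.
  - intros x a b y Hb Hb0 Hy.
    apply LimSup_average_of_bounded_psum with M; intros n.
    rewrite (psum_ext _ (fun s => b s * (run_forecaster (hedging_forecaster X A) x a b y s - y s)))
      by (intros s; ring).
    rewrite psum_hedging_forecaster.
    apply score_history_bound; [lra | | exact Hy].
    intros t; split; [apply Hb0 | apply Hb].
Qed.
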